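(* Let $n$ be an odd integer with $n\ne5$, and let $1\le k<n$. Then in $\mathrm{Aut}(GPG(n,k))$: (i) the elements of odd order form a unique cyclic normal subgroup of order $n$; (ii) if $k\not\equiv\pm1\pmod n$, then no involution commutes with (every element of) this cyclic normal subgroup of order $n$.
   Context: The generalized Petersen graph $GPG(n,k)$ has vertex set $\{c_1,\dots,c_n,c_1',\dots,c_n'\}$ and edges $c_ic_{i+1}$, $c_ic_i'$, $c_i'c_{i+k}'$ for $i\in\{1,\dots,n\}$, subscripts read modulo $n$. *)

From mathcomp Require Import all_boot all_fingroup.
Set Implicit Arguments. Unset Strict Implicit. Unset Printing Implicit Defensive.

(* Vertices of GPG(n,k): inl i = c_i (outer), inr i = c_i' (inner), i in {0..n-1}
   (indices shifted by one w.r.t. the paper, subscripts mod n). *)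
Definition gpv (n : nat) : finType := ('I_n + 'I_n)%type.

Definition gpg_adj (n k : nat) (x y : gpv n) : bool :=
  match x, y with
  | inl i, inl j => (val j == (val i + 1) %% n) || (val i == (val j + 1) %% n)
  | inl i, inr j => val i == val j
  | inr i, inl j => val i == val j
  | inr i, inr j => (val j == (val i + k) %% n) || (val i == (val j + k) %% n)
  end.
Arguments gpg_adj : clear implicits.

Definition gpg_aut_set (n k : nat) : {set {perm gpv n}} :=
  [set s : {perm gpv n} | [forall x, forall y, gpg_adj n k (s x) (s y) == gpg_adj n k x y]].

Lemma gpg_aut_group_set n k : group_set (gpg_aut_set n k).
Proof.
apply/andP; split.
  by rewrite inE; apply/forallP => x; apply/forallP => y; rewrite !perm1.
apply/subsetP => _ /imset2P[s t Hs Ht ->].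
move: Hs Ht; rewrite !inE => /forallP Hs /forallP Ht.
apply/forallP => x; apply/forallP => y; rewrite !permM.
move: (forallP (Ht (s x)) (s y)) (forallP (Hs x) y) => /eqP -> /eqP ->.
by [].
Qed.

Canonical gpg_aut (n k : nat) : {group {perm gpv n}} := Group (gpg_aut_group_set n k).

Definition gpg_odd_elts (n k : nat) : {set {perm gpv n}} :=
  [set g in gpg_aut n k | odd #[g]%g].

(* Non-backtracking walks recognise the spokes.  For an arc x -> y let N_L(x, y) count the
   non-backtracking walks of length L that begin with x -> y and end at x; automorphisms preserve
   these numbers.  GPG(n,k) is covered by the graph on bool * Z * Z in which (outer, a, b) lies
   over c_(a+bk) or c'_(a+bk), and non-backtracking walks lift uniquely, so N_L counts walks of
   the cover ending in the lattice {(a, b) | n divides a + bk}, of which only the points of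
   l1-norm at most L matter.  For L = 3..8 these counts separate spokes from rim edges, in both
   orientations, as soon as n is odd and n <> 5: for n > 64 the lattice points of norm at most 8
   are 0 alone or the multiples of one vector, which leaves finitely many cases, and the smaller
   n are checked directly.

   So automorphisms map spokes to spokes and rims onto rims, and the square of an automorphism
   fixes the outer rim, hence is a rotation or a reflection.  An element of odd order is a power
   of its square and reflections are involutions, so the elements of odd order are the n
   rotations.  An involution commuting with the rotations swaps the rims, and it sends the outer
   edge c_0 c_1 to an inner edge c'_a c'_(a+1), whence k = 1 or k = -1 mod n. *)

From HB Require Import structures.
From mathcomp Require Import all_boot all_fingroup all_solvable all_algebra.
From mathcomp Require Import ring zify.
Set Implicit Arguments. Unset Strict Implicit. Unset Printing Implicit Defensive.
Import GRing.Theory.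

Inductive dir := OutFwd | OutBwd | InFwd | InBwd | Spoke.

Definition nat_of_dir d :=
  match d with OutFwd => 0 | OutBwd => 1 | InFwd => 2 | InBwd => 3 | Spoke => 4 end%N.
Definition dir_of_nat m :=
  match m with 0 => OutFwd | 1 => OutBwd | 2 => InFwd | 3 => InBwd | _ => Spoke end%N.
Lemma nat_of_dirK : cancel nat_of_dir dir_of_nat. Proof. by case. Qed.
HB.instance Definition _ := Equality.copy dir (can_type nat_of_dirK).

Definition all_dirs := [:: OutFwd; OutBwd; InFwd; InBwd; Spoke].
Definition rev_dir d :=
  match d with
  | OutFwd => OutBwd | OutBwd => OutFwd | InFwd => InBwd | InBwd => InFwd | Spoke => Spoke
  end.
Definition dir_from (outer : bool) d :=
  match d with OutFwd | OutBwd => outer | InFwd | InBwd => ~~ outer | Spoke => true end.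
Definition rim_after (outer : bool) d := if d is Spoke then ~~ outer else outer.
Definition shift_out d : int := match d with OutFwd => 1 | OutBwd => -1 | _ => 0 end.
Definition shift_in d : int := match d with InFwd => 1 | InBwd => -1 | _ => 0 end.

(* Walks in the covering graph: [last] is the direction of the step that led to
   [(outer, a, b)], which may not be undone. *)
Fixpoint cover_walks (fin : bool -> int -> int -> bool) m outer last (a b : int) : nat :=
  if m is m'.+1 then
    sumn [seq cover_walks fin m' (rim_after outer d) d (a + shift_out d) (b + shift_in d)
         | d <- all_dirs & dir_from outer d && (d != rev_dir last)]
  else fin outer a b.

Lemma shift_norm d : (`|shift_out d| + `|shift_in d| <= 1)%N.
Proof. by case: d. Qed.

Lemma eq_cover_walks f g m outer last a b :
    (forall t a' b', (`|a' - a| + `|b' - b| <= m)%N -> f t a' b' = g t a' b') ->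
  cover_walks f m outer last a b = cover_walks g m outer last a b.
Proof.
elim: m outer last a b => [|m IHm] outer last a b fg /=; first by rewrite fg // !subrr.
congr sumn; apply: eq_map => d; apply: IHm => t a' b' near; apply: fg.
move: near (shift_norm d); move: (shift_out d) (shift_in d) => x y; lia.
Qed.

Definition ends_at (P : int -> int -> bool) (outer : bool) t a b := (t == outer) && P a b.

(* N_L of an arc leaving rim [outer] in direction [d], when [P] is the lattice of GPG(n,k). *)
Definition closed_walks P L outer d :=
  cover_walks (ends_at P outer) L.-1 (rim_after outer d) d (shift_out d) (shift_in d).

Definition arc_signature P L outer d :=
  (closed_walks P L outer d, closed_walks P L (rim_after outer d) (rev_dir d)).

(* For a rim direction [d], [dir_from true d] is the rim of [d]. *)
Definition spoke_distinguished P :=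
  all (fun d => has (fun L => arc_signature P L true Spoke
                              != arc_signature P L (dir_from true d) d) (iota 3 6))
      [:: OutFwd; OutBwd; InFwd; InBwd].

Lemma eq_spoke_distinguished P Q :
    (forall a b, (`|a| + `|b| <= 8)%N -> P a b = Q a b) ->
  spoke_distinguished P = spoke_distinguished Q.
Proof.
move=> PQ; have closedE L outer d : (L <= 8)%N ->
    closed_walks P L outer d = closed_walks Q L outer d.
  move=> L8; apply: eq_cover_walks => t a b near; rewrite /ends_at PQ //.
  move: near (shift_norm d); move: (shift_out d) (shift_in d) => x y; lia.
apply: eq_all => d; apply: eq_in_has => L; rewrite mem_iota => /andP[_ L8].
by rewrite /arc_signature !closedE //; case: d.
Qed.

Section NonBacktrackingWalks.
Variables (T : finType) (e : rel T).

Fixpoint nb_walks (z : T) m (p x : T) : nat :=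
  if m is m'.+1 then \sum_(y | e x y && (y != p)) nb_walks z m' x y else x == z.

Definition arc_walks L (x y : T) := nb_walks x L.-1 x y.

Section Automorphism.
Variable g : {perm T}.
Hypothesis ge : forall u v, e (g u) (g v) = e u v.

Lemma nb_walks_perm z m p x : nb_walks (g z) m (g p) (g x) = nb_walks z m p x.
Proof.
elim: m p x => [|m IHm] p x /=; first by rewrite (inj_eq perm_inj).
rewrite (reindex_inj (@perm_inj _ g)); apply: eq_big => [y|y _]; last exact: IHm.
by rewrite ge (inj_eq perm_inj).
Qed.

Lemma arc_walks_perm L x y : arc_walks L (g x) (g y) = arc_walks L x y.
Proof. exact: nb_walks_perm. Qed.

End Automorphism.

End NonBacktrackingWalks.

Definition lattice (n k : nat) (a b : int) := (n%:Z %| (a + b * k%:Z)%R)%Z.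

Definition l1 (u : int * int) := (`|u.1| + `|u.2|)%N.
Definition det2 (u w : int * int) : int := (u.1 * w.2 - w.1 * u.2)%R.

Lemma det2_bound u w : (`|det2 u w| <= l1 u * l1 w)%N.
Proof.
case: u w => [a b] [c d]; rewrite /det2 /l1 /=.
by have := leqD_dist (a * d) 0 (c * b); rewrite subr0 sub0r abszN !abszM; nia.
Qed.

Lemma dvdz_small_eq0 (n : nat) (z : int) : (`|z| < n)%N -> (n%:Z %| z)%Z -> z = 0%R.
Proof.
move=> zn nz; apply/eqP; rewrite -absz_eq0; apply/negPn/negP; rewrite -lt0n => z0.
by move: (dvdn_leq z0 nz); rewrite leqNgt zn.
Qed.

Section Lattice.
Variables n k : nat.
Local Open Scope ring_scope.
Local Notation lattice := (lattice n k).

Lemma lattice_lin r s a b c d :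
  lattice a b -> lattice c d -> lattice (r * a + s * c) (r * b + s * d).
Proof.
rewrite /lattice => ab cd.
have -> : r * a + s * c + (r * b + s * d) * k%:Z = r * (a + b * k%:Z) + s * (c + d * k%:Z).
  by ring.
by rewrite rpredD ?dvdz_mull.
Qed.

Lemma lattice_det2 u w : lattice u.1 u.2 -> lattice w.1 w.2 -> (n%:Z %| det2 u w)%Z.
Proof.
rewrite /lattice /det2 => ab cd.
have -> : u.1 * w.2 - w.1 * u.2 = w.2 * (u.1 + u.2 * k%:Z) - u.2 * (w.1 + w.2 * k%:Z) by ring.
by rewrite rpredB ?dvdz_mull.
Qed.

Lemma lattice_half a b : odd n -> lattice (2 * a) (2 * b) -> lattice a b.
Proof.
rewrite /lattice => n_odd; have -> : 2 * a + 2 * b * k%:Z = 2 * (a + b * k%:Z) by ring.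
by rewrite Gauss_dvdzr // coprimezE /= coprimen2.
Qed.
End Lattice.

(* For [u.2 != 0]: (a, b) is an integer multiple of [u]. *)
Definition multiple_of (u : int * int) (a b : int) := (u.2 %| b)%Z && (a * u.2 == u.1 * b)%R.

Section LargeModulus.
Variables n k : nat.
Hypotheses (n_odd : odd n) (n_big : (64 < n)%N).
Local Open Scope ring_scope.
Local Notation in_lattice u := (lattice n k u.1 u.2).

Lemma lattice_ball_collinear u w : (l1 u <= 8)%N -> (l1 w <= 8)%N ->
  in_lattice u -> in_lattice w -> det2 u w = 0.
Proof.
move=> u8 w8 Lu Lw; apply: dvdz_small_eq0 (lattice_det2 Lu Lw).
by apply: leq_ltn_trans n_big; apply: leq_trans (det2_bound u w) (leq_mul u8 w8).
Qed.

Variable u : int * int.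
Hypotheses (u_lat : in_lattice u) (u_nz : u != (0, 0)) (u_ball : (l1 u <= 8)%N).
Hypothesis u_min : forall v, (l1 v <= 8)%N -> in_lattice v -> v != (0, 0) -> (l1 u <= l1 v)%N.

Lemma min_vec_snd_neq0 : u.2 != 0.
Proof.
apply: contra u_nz => /eqP u2_0; move: u_lat u_ball; rewrite /lattice /l1 u2_0 mul0r addr0.
move=> /dvdz_small_eq0 u1_0 u1_small; rewrite [u]surjective_pairing u1_0 ?u2_0 //.
by move: u1_small n_big; lia.
Qed.

Lemma min_vec_not_even : ~~ ((2 %| u.1)%Z && (2 %| u.2)%Z).
Proof.
apply/negP => /andP[/dvdzP[c uc] /dvdzP[d ud]].
have uE : u = (2 * c, 2 * d) by rewrite [u]surjective_pairing uc ud ![2 * _]mulrC.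
have Lv : lattice n k c d by apply: (lattice_half n_odd); move: u_lat; rewrite uE.
have v_nz : (c, d) != (0, 0).
  by apply: contra u_nz => /eqP[c0 d0]; rewrite uE c0 d0 !mulr0.
have v_lt : (l1 (c, d) < l1 u)%N.
  rewrite uE /l1 /= !abszM; move: v_nz.
  by case: (eqVneq c 0) => [->|c0]; case: (eqVneq d 0) => [->|d0] //= _; lia.
by have := u_min (leq_trans (ltnW v_lt) u_ball) Lv v_nz; rewrite leqNgt v_lt.
Qed.

Lemma min_vec_collinear w : (l1 w <= 8)%N -> in_lattice w -> w.1 * u.2 = u.1 * w.2.
Proof.
move=> w_ball Lw; apply/eqP; rewrite -subr_eq0 -oppr_eq0 opprB.
exact/eqP/(lattice_ball_collinear u_ball w_ball u_lat Lw).
Qed.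

Lemma min_vec_dvd_snd w : (l1 w <= 8)%N -> in_lattice w -> (u.2 %| w.2)%Z.
Proof.
move=> w_ball Lw; have u2_nz := min_vec_snd_neq0.
apply/dvdz_mod0P/eqP/negPn/negP => r_nz.
pose t := (w.2 %/ u.2)%Z; pose v := (w.1 - t * u.1, w.2 - t * u.2).
have v2E : v.2 = (w.2 %% u.2)%Z by rewrite /= {1}(divz_eq w.2 u.2) -/t addrAC subrr add0r.
have Lv : in_lattice v.
  have -> : v = (- t * u.1 + 1 * w.1, - t * u.2 + 1 * w.2) by congr (_, _); ring.
  exact: lattice_lin.
have v_nz : v != (0, 0) by apply: contra r_nz => /eqP v0; rewrite -v2E v0.
have v_col : v.1 * u.2 = u.1 * v.2.
  by rewrite /= mulrBl mulrBr min_vec_collinear //; ring.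
have v2_lt : (`|v.2| < `|u.2|)%N by rewrite v2E -ltz_nat gez0_abs ?modz_ge0 ?ltz_mod.
have v1_le : (`|v.1| <= `|u.1|)%N.
  rewrite -(@leq_pmul2r `|u.2|) ?absz_gt0 // -abszM v_col abszM.
  by rewrite leq_mul2l ltnW ?orbT.
have v_lt : (l1 v < l1 u)%N by rewrite /l1 -addnS leq_add.
by have := u_min (leq_trans (ltnW v_lt) u_ball) Lv v_nz; rewrite leqNgt v_lt.
Qed.

Lemma lattice_ball_multiple w : (l1 w <= 8)%N -> in_lattice w = multiple_of u w.1 w.2.
Proof.
move=> w_ball; apply/idP/idP => [Lw | /andP[/dvdzP[t w2E] /eqP w1E]].
  by rewrite /multiple_of min_vec_dvd_snd // min_vec_collinear // eqxx.
have w1E' : w.1 = t * u.1 by apply: (mulIf min_vec_snd_neq0); rewrite w1E w2E; ring.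
have -> : w = (t * u.1 + 0 * u.1, t * u.2 + 0 * u.2).
  by rewrite [w]surjective_pairing w1E' w2E !mul0r !addr0.
exact: lattice_lin.
Qed.

End LargeModulus.

Definition int_range8 : seq int := [seq x%:Z - 8 | x <- iota 0 17]%R.
Definition ball8 : seq (int * int) :=
  [seq u <- [seq (a, b) | a <- int_range8, b <- int_range8] | (l1 u <= 8)%N].

Lemma mem_ball8 u : (u \in ball8) = (l1 u <= 8)%N.
Proof.
case: u => a b; rewrite mem_filter andbC; apply: andb_idl => ab.
have range (c : int) : (`|c| <= 8)%N -> c \in int_range8.
  by move=> c8; apply/mapP; exists `|(c + 8)%R|%N; rewrite ?mem_iota; lia.
by apply: allpairs_f; apply: range; move: ab; rewrite /l1 /=; lia.
Qed.

Lemma spoke_distinguished_origin : spoke_distinguished (fun a b => (a == 0) && (b == 0))%R.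
Proof. by vm_compute. Qed.

(* The parity condition is needed: u = (4, 2) does not distinguish spokes. *)
Lemma spoke_distinguished_multiples :
  all (fun u => (u.2 != 0)%R && ~~ ((2 %| u.1)%Z && (2 %| u.2)%Z) ==>
                spoke_distinguished (multiple_of u)) ball8.
Proof. by vm_compute. Qed.

Lemma lattice_ball_trivial_or_min n k :
  (forall v, (l1 v <= 8)%N -> lattice n k v.1 v.2 -> v = (0, 0)%R) \/
  exists u, [/\ lattice n k u.1 u.2, u != (0, 0)%R, (l1 u <= 8)%N &
    forall v, (l1 v <= 8)%N -> lattice n k v.1 v.2 -> v != (0, 0)%R -> (l1 u <= l1 v)%N].
Proof.
pose nz_pt (v : int * int) := (v != (0, 0)%R) && lattice n k v.1 v.2.
have [has_nz | /hasPn no_nz] := boolP (has nz_pt ball8); last first.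
  left=> v vB v_lat; move: (no_nz v).
  by rewrite mem_ball8 /nz_pt v_lat andbT negbK => /(_ vB) /eqP.
have ex_l1 : exists N, has (fun v => nz_pt v && (l1 v == N)) ball8.
  by case/hasP: has_nz => v vB vP; exists (l1 v); apply/hasP; exists v; rewrite /= ?vP ?eqxx.
case: (ex_minnP ex_l1) => _ /hasP[u uB /andP[/andP[u_nz u_lat] /eqP <-]] u_min.
right; exists u; split; rewrite -?mem_ball8 // => v vB v_lat v_nz; apply: u_min.
by apply/hasP; exists v; rewrite ?mem_ball8 //= /nz_pt v_nz v_lat eqxx.
Qed.

Lemma spoke_distinguished_large n k : odd n -> (64 < n)%N -> spoke_distinguished (lattice n k).
Proof.
move=> n_odd n_big; case: (lattice_ball_trivial_or_min n k) => [triv | [u [u_lat u_nz uB u_min]]].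
  rewrite (eq_spoke_distinguished (Q := fun a b => (a == 0) && (b == 0))%R) => [|a b ab].
    exact: spoke_distinguished_origin.
  apply/idP/andP => [/(triv (a, b) ab) [-> ->] // | [/eqP-> /eqP->]].
  by rewrite /lattice mul0r addr0 dvdz0.
rewrite (eq_spoke_distinguished (Q := multiple_of u)) => [|a b ab].
  apply: (implyP (allP spoke_distinguished_multiples u _)); first by rewrite mem_ball8.
  rewrite (min_vec_snd_neq0 n_odd n_big u_lat u_nz uB).
  by rewrite (min_vec_not_even n_odd n_big u_lat u_nz uB u_min).
exact: (lattice_ball_multiple n_odd n_big u_lat u_nz uB u_min (w := (a, b))).
Qed.

Lemma spoke_distinguished_small :
  all (fun n => all (fun k => spoke_distinguished (lattice n k)) (iota 1 n.-1))
      [seq n <- iota 3 61 | odd n && (n != 5)].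
Proof. by vm_compute. Qed.

Lemma spoke_distinguished_lattice n k :
  odd n -> n != 5 -> (0 < k < n)%N -> spoke_distinguished (lattice n k).
Proof.
move=> n_odd n_ne5 /andP[k_gt0 k_lt_n].
have [n_big|n_small] := ltnP 64 n; first exact: spoke_distinguished_large.
have n_in : n \in [seq n <- iota 3 61 | odd n && (n != 5)].
  rewrite mem_filter n_odd n_ne5 mem_iota /=.
  by case: n n_odd n_small k_gt0 k_lt_n {n_ne5} => [|[|[|n]]] //= *; lia.
by apply: (allP (allP spoke_distinguished_small n n_in)); rewrite mem_iota; lia.
Qed.

Section GeneralizedPetersen.
Variables q k : nat.
Local Notation n := q.+2.
Hypotheses (n_odd : odd n) (k_gt0 : (0 < k)%N) (k_lt_n : (k < n)%N).
Local Open Scope ring_scope.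
Local Notation V := (gpv n).
Local Notation adj := (gpg_adj n k).

Definition kZ : 'I_n := k%:R.

Definition is_outer (x : V) := if x is inl _ then true else false.
Definition vindex (x : V) : 'I_n := match x with inl i | inr i => i end.
Definition vertex (outer : bool) (i : 'I_n) : V := if outer then inl i else inr i.

(* Directions not available at [x] leave it fixed. *)
Definition step (x : V) d : V :=
  match x, d with
  | inl i, OutFwd => inl (i + 1) | inl i, OutBwd => inl (i - 1) | inl i, Spoke => inr i
  | inr i, InFwd => inr (i + kZ) | inr i, InBwd => inr (i - kZ) | inr i, Spoke => inl i
  | _, _ => x
  end.

Lemma vertexE x : vertex (is_outer x) (vindex x) = x. Proof. by case: x. Qed.
Lemma is_outer_vertex t i : is_outer (vertex t i) = t. Proof. by case: t. Qed.

Lemma val_Zp1 : val (1 : 'I_n) = 1%N. Proof. by rewrite /= modn_small. Qed.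
Lemma val_kZ : val kZ = k. Proof. by rewrite /kZ Zp_nat /= modn_small. Qed.

Lemma natZp_eq a b : (a%:R == b%:R :> 'I_n) = (a == b %[mod n])%N.
Proof. by rewrite -val_eqE !Zp_nat. Qed.

Lemma natZp_eq0 m : (m%:R == 0 :> 'I_n) = (n %| m)%N.
Proof. by rewrite -val_eqE Zp_nat. Qed.

Lemma two_Zp_neq0 : 2%:R != 0 :> 'I_n.
Proof. by rewrite natZp_eq0; apply/negP => /(@dvdn_leq _ 2 isT); case: q n_odd => [|[]]. Qed.

Lemma add1_neq_sub1 (i : 'I_n) : i + 1 != i - 1.
Proof. by rewrite -subr_eq0 (_ : _ - _ = 2%:R) ?two_Zp_neq0 //; ring. Qed.

Lemma addk_neq_subk (i : 'I_n) : i + kZ != i - kZ.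
Proof.
rewrite -subr_eq0 (_ : _ - _ = (k * 2)%:R); last by rewrite natrM /kZ; ring.
rewrite natZp_eq0 Gauss_dvdl ?coprimen2 //.
by apply/negP => /(dvdn_leq k_gt0); rewrite leqNgt k_lt_n.
Qed.

Lemma val_addZp (i j : 'I_n) : val (i + j) = ((val i + val j) %% n)%N. Proof. by []. Qed.

Lemma adj_out_out i j : adj (inl i) (inl j) = (j == i + 1) || (j == i - 1).
Proof.
rewrite /gpg_adj -val_Zp1 -!val_addZp !val_eqE.
by congr (_ || _); apply/eqP/eqP => ->; rewrite ?subrK ?addrK.
Qed.

Lemma adj_in_in i j : adj (inr i) (inr j) = (j == i + kZ) || (j == i - kZ).
Proof.
rewrite /gpg_adj -val_kZ -!val_addZp !val_eqE.
by congr (_ || _); apply/eqP/eqP => ->; rewrite ?subrK ?addrK.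
Qed.

Lemma adj_out_in i j : adj (inl i) (inr j) = (j == i).
Proof. by rewrite /gpg_adj eq_sym. Qed.

Lemma adj_in_out i j : adj (inr i) (inl j) = (j == i).
Proof. by rewrite /gpg_adj eq_sym. Qed.

Definition neighbours (x : V) := [seq step x d | d <- all_dirs & dir_from (is_outer x) d].

Lemma adj_neighbours x y : adj x y = (y \in neighbours x).
Proof.
case: x => i; case: y => j; rewrite !inE ?adj_out_out ?adj_in_in ?adj_out_in ?adj_in_out //=.
  by rewrite !(inj_eq inl_inj) orbF.
by rewrite !(inj_eq inr_inj) orbF.
Qed.

Lemma step_inj x : {in [pred d | dir_from (is_outer x) d] &, injective (step x)}.
Proof.
case: x => i [] [] // _ _ /eqP;
  rewrite ?(inj_eq inl_inj) ?(inj_eq inr_inj) ?(eq_sym (_ - _));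
  by rewrite ?(negbTE (add1_neq_sub1 _)) ?(negbTE (addk_neq_subk _)).
Qed.

Lemma sum_adj_but (F : V -> nat) x d0 : dir_from (is_outer x) d0 ->
  (\sum_(y | adj x y && (y != step x d0)) F y)%N =
  sumn [seq F (step x d) | d <- all_dirs & dir_from (is_outer x) d && (d != d0)].
Proof.
move=> d0_ok; have nb_uniq : uniq (neighbours x).
  rewrite map_inj_in_uniq ?filter_uniq // => d d'; rewrite !mem_filter.
  by case/andP=> d_ok _ /andP[d'_ok _]; apply: step_inj.
transitivity (\sum_(y <- [seq y <- neighbours x | y != step x d0]) F y)%N.
  rewrite big_uniq ?filter_uniq //; apply: eq_bigl => y.
  by rewrite mem_filter adj_neighbours andbC.
rewrite big_filter big_map big_filter_cond sumnE big_map big_filter.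
apply: eq_bigl => d; case d_ok: (dir_from _ d) => //=.
by rewrite (inj_in_eq (@step_inj x)).
Qed.

Definition cover_proj (i0 : 'I_n) t (a b : int) : V := vertex t (i0 + a%:~R + b%:~R * kZ).

Lemma step_cover_proj i0 t a b d : dir_from t d ->
  step (cover_proj i0 t a b) d =
  cover_proj i0 (rim_after t d) (a + shift_out d) (b + shift_in d).
Proof.
by rewrite /cover_proj; case: t; case: d => //= _; congr (_ _); rewrite !intrD; ring.
Qed.

Lemma step_rev x d : dir_from (is_outer x) d -> step (step x d) (rev_dir d) = x.
Proof. by case: x => i; case: d => //= _; rewrite ?subrK ?addrK. Qed.

Lemma dir_from_rev t d : dir_from t d -> dir_from (rim_after t d) (rev_dir d).
Proof. by case: t; case: d. Qed.

Lemma is_outer_step x d :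
  dir_from (is_outer x) d -> is_outer (step x d) = rim_after (is_outer x) d.
Proof. by case: x; case: d. Qed.

Lemma nb_walks_cover z i0 m t last a b : dir_from t (rev_dir last) ->
  nb_walks adj z m (step (cover_proj i0 t a b) (rev_dir last)) (cover_proj i0 t a b) =
  cover_walks (fun t' a' b' => cover_proj i0 t' a' b' == z) m t last a b.
Proof.
elim: m t last a b => [|m IHm] t last a b back //=.
rewrite sum_adj_but is_outer_vertex //; congr sumn; apply/eq_in_map => d.
rewrite mem_filter => /andP[/andP[d_ok _] _].
have yE := step_cover_proj i0 a b d_ok.
have xE : cover_proj i0 t a b = step (step (cover_proj i0 t a b) d) (rev_dir d).
  by rewrite step_rev // is_outer_vertex.
by rewrite {1}xE yE IHm // dir_from_rev.
Qed.

Lemma intZp_eq0 (z : int) : (z%:~R == 0 :> 'I_n) = (n%:Z %| z)%Z.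
Proof.
by case: z => m; rewrite ?NegzE ?mulrNz ?oppr_eq0 -pmulrn natZp_eq0.
Qed.

Lemma cover_proj_eq i0 tt t a b :
  (cover_proj i0 t a b == vertex tt i0) = ends_at (lattice n k) tt t a b.
Proof.
rewrite /cover_proj /ends_at /lattice -intZp_eq0 intrD intrM -addrA.
rewrite -[X in _ == vertex _ X]addr0.
case: t; case: tt; rewrite /= ?(inj_eq inl_inj) ?(inj_eq inr_inj) ?(inj_eq (addrI i0)) //.
Qed.

Lemma arc_walks_gpg t i d L : dir_from t d ->
  arc_walks adj L (vertex t i) (step (vertex t i) d) = closed_walks (lattice n k) L t d.
Proof.
move=> d_ok; have x0 : vertex t i = cover_proj i t 0 0 by rewrite /cover_proj mul0r !addr0.
have yE := step_cover_proj i 0 0 d_ok; rewrite !add0r -x0 in yE.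
have xE : vertex t i = step (step (vertex t i) d) (rev_dir d) by rewrite step_rev ?is_outer_vertex.
rewrite /arc_walks /closed_walks {2}xE yE nb_walks_cover ?dir_from_rev //.
by apply: eq_cover_walks => t' a' b' _; rewrite cover_proj_eq.
Qed.

Lemma arc_signature_gpg x d L : dir_from (is_outer x) d ->
  arc_signature (lattice n k) L (is_outer x) d =
  (arc_walks adj L x (step x d), arc_walks adj L (step x d) x).
Proof.
move=> d_ok; have y_ok : dir_from (is_outer (step x d)) (rev_dir d).
  by rewrite is_outer_step // dir_from_rev.
rewrite /arc_signature -(arc_walks_gpg (vindex x) L d_ok) vertexE -is_outer_step //.
by rewrite -(arc_walks_gpg (vindex (step x d)) L y_ok) vertexE step_rev.
Qed.

Lemma gpg_autP (g : {perm V}) :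
  reflect (forall x y, adj (g x) (g y) = adj x y) (g \in gpg_aut n k).
Proof.
rewrite inE; apply: (iffP forallP) => [g_aut x y | g_aut x].
  exact/eqP/(forallP (g_aut x) y).
by apply/forallP => y; rewrite g_aut.
Qed.

Hypothesis spokes_distinguished : spoke_distinguished (lattice n k).

Lemma aut_spoke g i : g \in gpg_aut n k -> is_outer (g (inl i)) != is_outer (g (inr i)).
Proof.
move=> /gpg_autP g_aut; set x := g (inl i); set y := g (inr i).
have : y \in neighbours x by rewrite -adj_neighbours /x /y g_aut adj_out_in.
case/mapP => d; rewrite mem_filter => /andP[d_ok _] yE.
have rim_y : is_outer y = rim_after (is_outer x) d by rewrite yE is_outer_step.
apply/negP; rewrite rim_y => same_rim.
have d_rim : d \in [:: OutFwd; OutBwd; InFwd; InBwd] /\ dir_from true d = is_outer x.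
  by move: same_rim d_ok; case: (is_outer x); case: d {yE rim_y}.
case: d_rim => d_in d_true; case/hasP: (allP spokes_distinguished d d_in) => L _.
rewrite d_true arc_signature_gpg // -yE /x /y !(arc_walks_perm g_aut).
by move: (arc_signature_gpg (x := inl i) L (isT : dir_from true Spoke)) => /= ->; rewrite eqxx.
Qed.

Lemma aut_rim_edge g x y : g \in gpg_aut n k -> adj x y ->
  (is_outer (g x) == is_outer (g y)) = (is_outer x == is_outer y).
Proof.
have spoke_pres h u v : h \in gpg_aut n k -> adj u v ->
    is_outer u != is_outer v -> is_outer (h u) != is_outer (h v).
  move=> hA; case: u => i; case: v => j //; rewrite ?adj_out_in ?adj_in_out => /eqP-> _.
    exact: aut_spoke.
  by rewrite eq_sym; apply: aut_spoke.
move=> gA xy; apply/idP/idP; apply: contraLR => rims_ne; first exact: spoke_pres.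
have gxy : adj (g x) (g y) by rewrite (gpg_autP _ gA).
by have := spoke_pres _ _ _ (groupVr gA) gxy rims_ne; rewrite !permK.
Qed.

Lemma aut_rims g x : g \in gpg_aut n k -> is_outer (g x) = (is_outer x == is_outer (g (inl 0))).
Proof.
move=> gA; have outer m : is_outer (g (inl m%:R)) = is_outer (g (inl 0)).
  elim: m => [|m IHm] //; rewrite -IHm; apply/eqP.
  by rewrite eq_sym aut_rim_edge // adj_out_out mulrSr eqxx.
case: x => i; first by rewrite -(natr_Zp i) outer /=; case: (is_outer _).
by move: (aut_spoke i gA); rewrite -(natr_Zp i) outer /=; case: (is_outer _); case: (is_outer _).
Qed.

Definition relabel (f : 'I_n -> 'I_n) (x : V) : V :=
  match x with inl i => inl (f i) | inr i => inr (f i) end.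

Lemma relabelK f f' : cancel f f' -> cancel (relabel f) (relabel f').
Proof. by move=> fK [] i /=; rewrite fK. Qed.

Definition rot : {perm V} := perm (can_inj (relabelK (addrK 1))).

Lemma rotX m x : (rot ^+ m)%g x = relabel (fun i => i + m%:R) x.
Proof.
elim: m x => [|m IHm] x; first by rewrite expg0 perm1; case: x => i /=; rewrite addr0.
by rewrite expgSr permM IHm permE; case: x => i /=; rewrite mulrSr addrA.
Qed.

Lemma rot_aut : rot \in gpg_aut n k.
Proof.
apply/gpg_autP => x y; rewrite !permE.
case: x => i; case: y => j; cbn [relabel];
  rewrite ?adj_out_out ?adj_in_in ?adj_out_in ?adj_in_out ?(inj_eq (addIr 1)) //.
  by rewrite (addrAC i 1) !(inj_eq (addIr 1)).
by rewrite (addrAC i 1) (addrAC i 1 (- kZ)) !(inj_eq (addIr 1)).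
Qed.

Lemma order_rot : #[rot]%g = n.
Proof.
apply/eqP; rewrite eqn_dvd; apply/andP; split.
  rewrite order_dvdn; apply/eqP/permP => x; rewrite rotX perm1.
  have -> : (n%:R : 'I_n) = 0 by apply/eqP; rewrite natZp_eq0.
  by case: x => i /=; rewrite addr0.
have := congr1 (fun h : {perm V} => h (inl 0)) (expg_order rot).
by rewrite rotX perm1 /= add0r => -[] /eqP; rewrite natZp_eq0.
Qed.

Lemma aut_preserving_rims g : g \in gpg_aut n k -> is_outer (g (inl 0)) ->
  exists2 e : 'I_n, (e == 1) || (e == -1) &
    exists a, forall x, g x = relabel (fun i => a + e * i) x.
Proof.
move=> gA g0_out; have g_aut := gpg_autP _ gA.
have rims x : is_outer (g x) = is_outer x by rewrite aut_rims // g0_out eqb_id.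
have outer i : exists j, g (inl i) = inl j.
  by move: (rims (inl i)); case: (g (inl i)) => j //; exists j.
have [a g0] := outer 0; have [b g1] := outer 1.
have : adj (g (inl 0)) (g (inl 1)) by rewrite g_aut adj_out_out add0r eqxx.
rewrite g0 g1 adj_out_out => ab.
have e_pm : (b - a == 1) || (b - a == -1).
  by case/orP: ab => /eqP->; rewrite addrAC subrr add0r eqxx ?orbT.
exists (b - a) => //; exists a; have step_ok (x y : 'I_n) : (y == x + 1) || (y == x - 1) ->
    (y == x + (b - a)) || (y == x - (b - a)).
  by case/orP: e_pm => /eqP->; rewrite ?opprK // orbC.
have g_outer m : g (inl m%:R) = inl (a + (b - a) * m%:R) /\
                 g (inl m.+1%:R) = inl (a + (b - a) * m.+1%:R).
  elim: m => [|m [gm gm1]]; first by rewrite mulr0n mulr1n g0 g1 mulr0 addr0 mulr1 addrC subrK.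
  split=> //; have [c gc] := outer m.+2%:R.
  have : adj (g (inl m.+1%:R)) (g (inl m.+2%:R)) by rewrite g_aut adj_out_out [m.+2%:R]mulrSr eqxx.
  rewrite gm1 gc adj_out_out => /step_ok /orP[] /eqP c_eq.
    by rewrite c_eq; congr inl; ring.
  have : g (inl m.+2%:R) = g (inl m%:R).
    by rewrite gc gm c_eq; congr inl; ring.
  move/perm_inj => -[] /eqP; rewrite -subr_eq0 (_ : _ - _ = 2%:R) ?(negbTE two_Zp_neq0) //.
  by rewrite !mulrSr; ring.
have g_inner i : g (inr i) = inr (a + (b - a) * i).
  have : adj (g (inl i)) (g (inr i)) by rewrite g_aut adj_out_in.
  rewrite -(natr_Zp i) (proj1 (g_outer _)); move: (rims (inr (val i)%:R)).
  by case: (g (inr _)) => // j _; rewrite adj_out_in => /eqP->.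
by case=> i; rewrite ?g_inner // -{1}(natr_Zp i) (proj1 (g_outer _)) natr_Zp.
Qed.

Lemma reflection_involutive (a : 'I_n) x :
  relabel (fun i => a + -1 * i) (relabel (fun i => a + -1 * i) x) = x.
Proof. by case: x => i /=; rewrite !mulN1r opprD opprK addrA subrr add0r. Qed.

Lemma aut_rims_square g : g \in gpg_aut n k -> is_outer ((g * g)%g (inl 0)).
Proof. by move=> gA; rewrite permM aut_rims // eqxx. Qed.

Lemma odd_order_aut g : g \in gpg_aut n k -> odd #[g]%g -> g \in <[rot]>%g.
Proof.
move=> gA g_odd.
have gE : g = ((g * g) ^+ (#[g]%g.+1)./2)%g.
  rewrite -[(g * g)%g]expg2 -expgM mul2n.
  have := odd_double_half #[g]%g.+1; rewrite /= g_odd add0n => ->.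
  by rewrite expgSr expg_order mul1g.
have [e e_pm [a g2E]] := aut_preserving_rims (groupM gA gA) (aut_rims_square gA).
case/orP: e_pm => /eqP e_eq; rewrite {}e_eq in g2E.
  rewrite gE; suff -> : (g * g = rot ^+ val a)%g by rewrite groupX // mem_cycle.
  by apply/permP => x; rewrite g2E rotX natr_Zp; case: x => i /=; rewrite mul1r addrC.
have g4 : (g ^+ 4 = 1)%g.
  apply/permP => x; rewrite perm1 (_ : 4 = 2 + 2)%N // expgD expg2 !permM.
  by rewrite -!(permM g g) !g2E reflection_involutive.
have : (#[g]%g %| 2 * (2 * 1))%N by rewrite order_dvdn g4.
rewrite !Gauss_dvdr ?coprimen2 // dvdn1 order_eq1 => /eqP->; exact: group1.
Qed.

Lemma gpg_odd_eltsE : gpg_odd_elts n k = <[rot]>%g.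
Proof.
apply/setP => g; rewrite inE; apply/andP/idP => [[gA g_odd] | g_rot]; first exact: odd_order_aut.
split; first by apply: (subsetP _ _ g_rot); rewrite cycle_subG rot_aut.
by apply: dvdn_odd (order_dvdG g_rot) _; rewrite -orderE order_rot.
Qed.

Lemma involution_commuting_rot g : g \in gpg_aut n k -> #[g]%g = 2 -> commute g rot ->
  ((k == 1 %[mod n]) || (k + 1 == 0 %[mod n]))%N.
Proof.
move=> gA g_ord g_rot; have g_aut := gpg_autP _ gA.
have g_rotE x : g (rot x) = rot (g x) by rewrite -!permM g_rot.
have rot0 : rot (inl 0) = inl 1 by rewrite permE /= add0r.
case g0_out: (is_outer (g (inl 0))).
  have [e /orP[] /eqP e_eq [a gE]] := aut_preserving_rims gA g0_out; rewrite {}e_eq in gE.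
    have g_rot_pow : g = (rot ^+ val a)%g.
      by apply/permP => x; rewrite gE rotX natr_Zp; case: x => i /=; rewrite mul1r addrC.
    have := dvdn_odd (order_dvdG (mem_cycle rot (val a))); rewrite -g_rot_pow g_ord.
    by rewrite -orderE order_rot => /(_ n_odd).
  move/eqP: (g_rotE (inl 0)); rewrite rot0 !gE permE; cbn [relabel].
  by rewrite (inj_eq inl_inj) mulr0 mulr1 addr0 eq_sym (negbTE (add1_neq_sub1 a)).
case g0: (g (inl 0)) g0_out => [//|a] _.
have : adj (g (inl 0)) (g (inl 1)) by rewrite g_aut adj_out_out add0r eqxx.
rewrite -rot0 g_rotE g0 permE adj_in_in !(inj_eq (addrI a)) ![1 == _]eq_sym eqr_oppLR -addr_eq0.
have -> : (kZ == 1) = (k == 1 %[mod n])%N by exact: (natZp_eq k 1).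
by have -> : (kZ + 1 == 0) = (k + 1 == 0 %[mod n])%N by rewrite -natZp_eq natrD.
Qed.

End GeneralizedPetersen.

Section OddOrderElements.
Variables (gT : finGroupType) (G : {group gT}).
Local Open Scope group_scope.

Lemma norm_odd_elts : G \subset 'N([set x in G | odd #[x]]).
Proof.
apply/normsP => g gG; apply/setP => x.
by rewrite mem_conjg !inE groupJr ?groupV // orderJ.
Qed.

Lemma sub_odd_elts (H : {group gT}) : H \subset G -> odd #|H| -> H \subset [set x in G | odd #[x]].
Proof.
move=> sHG H_odd; apply/subsetP => x xH.
by rewrite inE (subsetP sHG) // (dvdn_odd (order_dvdG xH)).
Qed.

End OddOrderElements.

Theorem lemma6p2 (n k : nat) :
  odd n -> n != 5 -> 0 < k < n ->
  [/\ group_set (gpg_odd_elts n k),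
      cyclic (gpg_odd_elts n k),
      (gpg_odd_elts n k <| gpg_aut n k)%g,
      #|gpg_odd_elts n k| = n
    & (forall H : {group {perm gpv n}},
          cyclic H -> (H <| gpg_aut n k)%g -> #|H| = n -> H :=: gpg_odd_elts n k)]
  /\
  (k <> 1 %[mod n] -> k + 1 <> 0 %[mod n] ->
   forall g : {perm gpv n}, g \in gpg_aut n k -> #[g]%g = 2 ->
   ~ (forall x, x \in gpg_odd_elts n k -> commute g x)).
Proof.
move=> n_odd n_ne5 k_range; have dist := spoke_distinguished_lattice n_odd n_ne5 k_range.
case/andP: k_range => k_gt0 k_lt_n; have n_gt1 := leq_ltn_trans k_gt0 k_lt_n.
case: n n_gt1 n_odd k_lt_n dist {n_ne5} => [|[|q]] // _ n_odd k_lt_n dist.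
have oddE := gpg_odd_eltsE n_odd k_gt0 k_lt_n dist.
have card_odd : #|gpg_odd_elts q.+2 k| = q.+2 by rewrite oddE -orderE order_rot.
split.
  split=> //; first by rewrite oddE groupP.
    by rewrite oddE cycle_cyclic.
    rewrite /normal norm_odd_elts andbT; apply/subsetP => x; rewrite inE => /andP[] //.
  move=> H _ /andP[sHG _] cardH; apply/eqP; rewrite eqEcard cardH card_odd leqnn andbT.
  by rewrite sub_odd_elts ?cardH.
move=> k_ne1 k_neN1 g gA g_ord g_comm.
have rot_odd : rot q \in gpg_odd_elts q.+2 k by rewrite oddE cycle_id.
by case/orP: (involution_commuting_rot n_odd k_gt0 k_lt_n dist gA g_ord (g_comm _ rot_odd)) => /eqP.
Qed.
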